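(* The generating function $$G_{(132,321)}(x,p,q,y,z)=\sum_{n\ge 0}\ \sum_{\pi\in S_n(132,321)} x^n p^{\operatorname{asc}(\pi)} q^{\operatorname{des}(\pi)} y^{\operatorname{MNA}(\pi)} z^{\operatorname{MND}(\pi)}$$ is equal to $\dfrac{A}{(1-p^2x^2y)^3}$, where $$A=1 + x + p x^2 y - 3 p^2 x^2 y - 2 p^2 x^3 y - 2 p^3 x^4 y^2 + 3 p^4 x^4 y^2 + p^4 x^5 y^2 + p^5 x^6 y^3 - p^6 x^6 y^3 + q x^2 z + 3 p q x^3 y z + p^2 q x^4 y z + 2 p^2 q x^4 y^2 z + p^3 q x^5 y^2 z.$$
   Context: For $n\ge 0$, $S_n$ denotes the set of permutations $\pi=\pi_1\pi_2\cdots\pi_n$ of $[n]=\{1,\dots,n\}$ ($S_0$ consists of the empty permutation, for which all statistics below are $0$). A permutation $\pi\in S_n$ avoids a pattern $\tau\in S_k$ if there are no indices $i_1<\dots<i_k$ such that $\pi_{i_a}<\pi_{i_b}$ if and only if $\tau_a<\tau_b$; $S_n(\tau,\rho)$ is the set of permutations in $S_n$ avoiding both $\tau$ and $\rho$. $\operatorname{asc}(\pi)$ (resp. $\operatorname{des}(\pi)$) is the number of $i\in[n-1]$ with $\pi_i<\pi_{i+1}$ (resp. $\pi_i>\pi_{i+1}$). $\operatorname{MNA}(\pi)$ is the maximum size of a set $I\subseteq[n-1]$ such that $\pi_i<\pi_{i+1}$ for all $i\in I$ and $|i-j|\ge 2$ for distinct $i,j\in I$; $\operatorname{MND}(\pi)$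 is defined analogously with $\pi_i>\pi_{i+1}$. *)

From HB Require Import structures.
From mathcomp Require Import all_boot all_order all_algebra all_fingroup.
Set Implicit Arguments. Unset Strict Implicit. Unset Printing Implicit Defensive.
Import Order.TTheory GRing.Theory Num.Theory.

(* The one-line notation of a permutation pi of 'I_n (values 0..n-1;
   only relative order matters for all notions below). *)
Definition word (n : nat) (pi : 'S_n) : seq nat := [seq val (pi i) | i <- enum 'I_n].

Definition contains (w tau : seq nat) : bool :=
  [exists f : {ffun 'I_(size tau) -> 'I_(size w)},
     [forall a : 'I_(size tau), forall b : 'I_(size tau),
        ((a < b) ==> (f a < f b)) &&
        ((nth 0 w (f a) < nth 0 w (f b)) == (nth 0 tau a < nth 0 tau b))]].

Definition avoids (w tau : seq nat) : bool := ~~ contains w tau.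

(* 0-based positions i with i+1 < size w (i.e. i+1 in [n-1] 1-based). *)
Definition is_asc (w : seq nat) (i : nat) : bool :=
  (i.+1 < size w) && (nth 0 w i < nth 0 w i.+1).
Definition is_des (w : seq nat) (i : nat) : bool :=
  (i.+1 < size w) && (nth 0 w i > nth 0 w i.+1).

Definition asc (w : seq nat) : nat := count (is_asc w) (iota 0 (size w)).
Definition des (w : seq nat) : nat := count (is_des w) (iota 0 (size w)).

Definition nonadj_set (m : nat) (P : nat -> bool) (I : {set 'I_m}) : bool :=
  [forall i in I, P i] &&
  [forall i in I, forall j in I, (i != j) ==> ((i.+2 <= j) || (j.+2 <= i))].

Definition MNA (w : seq nat) : nat :=
  \max_(I : {set 'I_(size w)} | nonadj_set (is_asc w) I) #|I|.
Definition MND (w : seq nat) : nat :=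
  \max_(I : {set 'I_(size w)} | nonadj_set (is_des w) I) #|I|.

Local Open Scope ring_scope.

(* Coefficient of x^n in G_{(132,321)}(x,p,q,y,z). *)
Definition Gcoef (R : comNzRingType) (p q y z : R) (n : nat) : R :=
  \sum_(pi : 'S_n | avoids (word pi) [:: 1; 3; 2]%N && avoids (word pi) [:: 3; 2; 1]%N)
     p ^+ asc (word pi) * q ^+ des (word pi)
     * y ^+ MNA (word pi) * z ^+ MND (word pi).

Definition Apoly (R : comNzRingType) (p q y z : R) : {poly R} :=
  1 + 'X + (p * y)%:P * 'X^2 - (3%:R * p ^+ 2 * y)%:P * 'X^2
  - (2%:R * p ^+ 2 * y)%:P * 'X^3 - (2%:R * p ^+ 3 * y ^+ 2)%:P * 'X^4
  + (3%:R * p ^+ 4 * y ^+ 2)%:P * 'X^4 + (p ^+ 4 * y ^+ 2)%:P * 'X^5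
  + (p ^+ 5 * y ^+ 3)%:P * 'X^6 - (p ^+ 6 * y ^+ 3)%:P * 'X^6
  + (q * z)%:P * 'X^2 + (3%:R * p * q * y * z)%:P * 'X^3
  + (p ^+ 2 * q * y * z)%:P * 'X^4 + (2%:R * p ^+ 2 * q * y ^+ 2 * z)%:P * 'X^4
  + (p ^+ 3 * q * y ^+ 2 * z)%:P * 'X^5.

Definition Dpoly (R : comNzRingType) (p y : R) : {poly R} :=
  (1 - (p ^+ 2 * y)%:P * 'X^2) ^+ 3.

(* A (132, 321)-avoiding permutation w of {0, ..., n-1} increases before its
   minimum 0 (a descent there would make a 321 with the 0) and from the 0 on
   (a descent there would make a 132 with the 0); avoiding 132 also forces the
   values before the 0 to be an interval.  So apart from the identity these are
   the words  a, ..., a+b-1, 0, ..., a-1, a+b, ..., n-1  with a, b > 0 and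
   a + b <= n.  Such a word has a single descent, after position b, and its
   n - 2 ascents form runs of b - 1 and n - b - 1 consecutive positions, so
   MNA = b/2 + (n-b)/2 and MND = 1.  Summing over a and b, the coefficient of
   x^(2t+2), resp. x^(2t+3), is (p^2 y)^t times a quadratic polynomial in t, so
   multiplying by (1 - p^2 x^2 y)^3 kills every coefficient of degree >= 8; the
   first eight are checked directly. *)

From HB Require Import structures.
From mathcomp Require Import all_boot all_order all_algebra all_fingroup.
From mathcomp Require Import zify ring.
Set Implicit Arguments. Unset Strict Implicit. Unset Printing Implicit Defensive.
Import Order.TTheory GRing.Theory Num.Theory.

Lemma contains3P (w : seq nat) (t0 t1 t2 : nat) :
  reflect (exists i j k, [/\ i < j, j < k, k < size w &
             forall a b : 'I_3,
               (nth 0 w (nth 0 [:: i; j; k] a) < nth 0 w (nth 0 [:: i; j; k] b))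
               = (nth 0 [:: t0; t1; t2] a < nth 0 [:: t0; t1; t2] b)])
          (contains w [:: t0; t1; t2]).
Proof.
apply: (iffP existsP) => [[f /forallP occ] | [i [j [k [ij jk kw cmp]]]]].
  have lt_f (a b : 'I_3) : a < b -> f a < f b.
    by move: (forallP (occ a) b) => /andP[/implyP].
  have fE (a : 'I_3) : nth 0 [:: val (f ord0); val (f (inord 1)); val (f ord_max)] a = f a.
    by case: a => [[|[|[|//]]] ?]; congr (val (f _)); apply: val_inj; rewrite /= ?inordK.
  exists (f ord0), (f (inord 1)), (f ord_max); split; rewrite ?lt_f ?inordK //.
  by move=> a b; rewrite !fE; move: (forallP (occ a) b) => /andP[_ /eqP].
have ltw : forall a : 'I_3, nth 0 [:: i; j; k] a < size w.
  by case=> [[|[|[|//]]] ?] /=; lia.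
exists [ffun a => Ordinal (ltw a)]; apply/forallP => a; apply/forallP => b.
rewrite !ffunE /= cmp eqxx andbT; apply/implyP.
by case: a b => [[|[|[|//]]] ?] [[|[|[|//]]] ?] //=; lia.
Qed.

Lemma avoids321_nth (w : seq nat) i j k : avoids w [:: 3; 2; 1] ->
  i < j -> j < k -> k < size w -> (nth 0 w k < nth 0 w j < nth 0 w i) = false.
Proof.
move=> /contains3P w321 ij jk kw; apply/negP => /andP[kj ji]; apply: w321.
by exists i, j, k; split=> // [[[|[|[|//]]] ?] [[|[|[|//]]] ?]] /=; lia.
Qed.

Lemma avoids132_nth (w : seq nat) i j k : avoids w [:: 1; 3; 2] ->
  i < j -> j < k -> k < size w -> (nth 0 w i < nth 0 w k < nth 0 w j) = false.
Proof.
move=> /contains3P w132 ij jk kw; apply/negP => /andP[ik kj]; apply: w132.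
by exists i, j, k; split=> // [[[|[|[|//]]] ?] [[|[|[|//]]] ?]] /=; lia.
Qed.

Lemma asc_add_des (w : seq nat) : uniq w -> asc w + des w = (size w).-1.
Proof.
move=> w_uniq; rewrite /asc /des -count_predUI.
have -> : count (predI (is_asc w) (is_des w)) (iota 0 (size w)) = 0.
  by rewrite (eq_count (a2 := pred0)) ?count_pred0 // => i; rewrite /= /is_asc /is_des; lia.
rewrite addn0 (eq_in_count (a2 := fun i => i.+1 < size w)) => [|i].
  case: (size w) => // m; rewrite -addn1 iotaD count_cat /= add0n.
  rewrite (eq_in_count (a2 := predT)) ?count_predT ?size_iota => [|i];
    rewrite ?mem_iota /=; lia.
rewrite mem_iota /= /is_asc /is_des -andb_orr => _; case: ltnP => //= i1_lt.
by rewrite -neq_ltn nth_uniq ?ltn_eqF ?(ltnW i1_lt).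
Qed.

Lemma leq_card_inj_bounded (T : finType) (A : {pred T}) (g : T -> nat) K :
  {in A &, injective g} -> {in A, forall x, g x < K} -> #|A| <= K.
Proof.
move=> g_inj g_lt; rewrite cardE -(size_iota 0 K) -(size_map g).
apply: uniq_leq_size => [|y /mapP[x]].
  by rewrite map_inj_in_uniq ?enum_uniq // => x x'; rewrite !mem_enum; apply: g_inj.
by rewrite mem_enum mem_iota => /g_lt ? ->.
Qed.

Section NonAdjacentSets.
Variables (m : nat) (P : nat -> bool).

Lemma nonadj_setP (I : {set 'I_m}) :
  reflect ({in I, forall i : 'I_m, P i} /\
           {in I &, forall i j : 'I_m, i != j -> (i.+2 <= j) || (j.+2 <= i)})
          (nonadj_set P I).
Proof.
apply: (iffP andP) => [[/forall_inP PI /forall_inP sepI] | [PI sepI]].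
  by split=> // i j iI jI; move/forall_inP: (sepI i iI) => /(_ j jI) /implyP.
by split; apply/forall_inP => // i iI; apply/forall_inP => j jI; apply/implyP; apply: sepI.
Qed.

Lemma bigmax_nonadj_eq K :
  (forall I : {set 'I_m}, nonadj_set P I -> #|I| <= K) ->
  (exists2 I : {set 'I_m}, nonadj_set P I & #|I| = K) ->
  \max_(I : {set 'I_m} | nonadj_set P I) #|I| = K.
Proof.
move=> le_K [I0 PI0 I0K]; apply/eqP; rewrite eqn_leq.
by apply/andP; split; [exact/bigmax_leqP | rewrite -I0K leq_bigmax_cond].
Qed.

(* The positions form two runs, [0, b-1) and [b, m-1). Halving the offset
   within a run is injective on a nonadjacent set; every other position of each
   run gives a nonadjacent set of the maximal size. *)
Lemma max_nonadj_two_runs b : b <= m ->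
  P =1 (fun i => (i.+1 < m) && (i.+1 != b)) ->
  \max_(I : {set 'I_m} | nonadj_set P I) #|I| = b./2 + (m - b)./2.
Proof.
move=> le_bm PE; apply: bigmax_nonadj_eq => [I /nonadj_setP[PI sepI] | ].
  pose g i := if i < b then i./2 else b./2 + (i - b)./2.
  apply: (@leq_card_inj_bounded _ _ (g \o val)) => [i j iI jI /= gij | i /PI].
    case: (eqVneq i j) => // /(sepI _ _ iI jI); move: (PI i iI) (PI j jI) gij.
    by rewrite /g !PE; do 2 case: ifP; lia.
  by rewrite PE /= /g; case: ifP; lia.
pose h j := if j < b./2 then j.*2 else b + (j - b./2).*2.
have lt_hm (j : 'I_(b./2 + (m - b)./2)) : h j < m.
  by move: (ltn_ord j); rewrite /h; case: ifP; lia.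
pose f j := Ordinal (lt_hm j).
have f_inj : injective f.
  move=> j k /(congr1 val) /=; rewrite /h => hjk; apply: ord_inj.
  by move: (ltn_ord j) (ltn_ord k) hjk; do 2 case: ifP; lia.
exists (f @: 'I__); last by rewrite card_imset // card_ord.
apply/nonadj_setP; split=> [_ /imsetP[j _ ->] | _ _ /imsetP[j _ ->] /imsetP[k _ ->]].
  by rewrite PE /= /h; move: (ltn_ord j); case: ifP; lia.
rewrite (inj_eq f_inj) /= /h -(inj_eq val_inj) /=; move: (ltn_ord j) (ltn_ord k).
by do 2 case: ifP; lia.
Qed.

Lemma max_nonadj_single b : P =1 (fun i => (i.+1 < m) && (i.+1 == b)) ->
  \max_(I : {set 'I_m} | nonadj_set P I) #|I| = (0 < b < m).
Proof.
move=> PE; apply: bigmax_nonadj_eq => [I /nonadj_setP[PI _] | ].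
  apply: (@leq_card_inj_bounded _ _ (fun _ => 0)) => [i j /PI Pi /PI Pj _ | i /PI].
    by apply: ord_inj; move: Pi Pj; rewrite !PE; lia.
  by rewrite PE; lia.
case: (boolP (0 < b < m)) => [b_in | _]; last first.
  by exists set0; rewrite ?cards0 //; apply/nonadj_setP; split=> ?; rewrite in_set0.
have lt_bm : b.-1 < m by lia.
exists [set Ordinal lt_bm]; last by rewrite cards1.
apply/nonadj_setP; split=> [i | i j]; rewrite !in_set1 => /eqP-> //.
  by rewrite PE /=; lia.
by move/eqP->; rewrite eqxx.
Qed.

End NonAdjacentSets.

Definition swap_blocks (n a b : nat) : seq nat :=
  iota a b ++ iota 0 a ++ iota (a + b) (n - (a + b)).

Section SwapBlocks.
Variables n a b : nat.
Hypothesis abn : a + b <= n.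

Lemma size_swap_blocks : size (swap_blocks n a b) = n.
Proof. by rewrite /swap_blocks !size_cat !size_iota; lia. Qed.

Lemma nth_swap_blocks i : i < n ->
  nth 0 (swap_blocks n a b) i = if i < b then a + i else if i < a + b then i - b else i.
Proof.
move=> lt_in; rewrite /swap_blocks !nth_cat !size_iota.
by repeat case: ifP => ?; rewrite ?nth_iota //; lia.
Qed.

Lemma mem_swap_blocks x : (x \in swap_blocks n a b) = (x < n).
Proof. by rewrite /swap_blocks !mem_cat !mem_iota; lia. Qed.

Lemma uniq_swap_blocks : uniq (swap_blocks n a b).
Proof.
rewrite /swap_blocks !cat_uniq !iota_uniq has_cat /= !andbT negb_or -!all_predC.
by rewrite -andbA; apply/and3P; split; apply/allP => x /=; rewrite !mem_iota; lia.
Qed.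

Lemma swap_blocks_avoids :
  avoids (swap_blocks n a b) [:: 1; 3; 2] && avoids (swap_blocks n a b) [:: 3; 2; 1].
Proof.
apply/andP; split; apply/contains3P => [[i [j [k [ij jk]]]]];
  rewrite size_swap_blocks => kn cmp;
  move: (cmp ord0 (inord 1)) (cmp ord0 ord_max) (cmp (inord 1) ord_max);
  rewrite /= !inordK //= !nth_swap_blocks; try lia;
  by repeat case: ifP => ?; lia.
Qed.

Hypothesis b_gt0_a_gt0 : 0 < b -> 0 < a.

Lemma is_asc_swap_blocks i :
  is_asc (swap_blocks n a b) i = (i.+1 < n) && (i.+1 != b).
Proof.
rewrite /is_asc size_swap_blocks; case: ltnP => //= lt_i1n.
rewrite !nth_swap_blocks ?(ltnW lt_i1n) //; have /implyP := b_gt0_a_gt0.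
by case: (ltnP i b); case: (ltnP i.+1 b);
  case: (ltnP i (a + b)); case: (ltnP i.+1 (a + b)) => /=; lia.
Qed.

Lemma is_des_swap_blocks i :
  is_des (swap_blocks n a b) i = (i.+1 < n) && (i.+1 == b).
Proof.
rewrite /is_des size_swap_blocks; case: ltnP => //= lt_i1n.
rewrite !nth_swap_blocks ?(ltnW lt_i1n) //; have /implyP := b_gt0_a_gt0.
by case: (ltnP i b); case: (ltnP i.+1 b);
  case: (ltnP i (a + b)); case: (ltnP i.+1 (a + b)) => /=; lia.
Qed.

Lemma des_swap_blocks : des (swap_blocks n a b) = (0 < b).
Proof.
rewrite /des size_swap_blocks (eq_count is_des_swap_blocks).
case: (posnP b) => [-> | b_gt0].
  by rewrite (eq_count (a2 := pred0)) ?count_pred0 // => i; rewrite /= andbF.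
rewrite (eq_in_count (a2 := pred1 b.-1)) => [|i]; last by rewrite mem_iota /=; lia.
by rewrite count_uniq_mem ?iota_uniq // mem_iota; lia.
Qed.

Lemma asc_swap_blocks : asc (swap_blocks n a b) = n.-1 - (0 < b).
Proof.
by rewrite -des_swap_blocks -[in n.-1]size_swap_blocks -(asc_add_des uniq_swap_blocks) addnK.
Qed.

Lemma MNA_swap_blocks : MNA (swap_blocks n a b) = b./2 + (n - b)./2.
Proof.
rewrite /MNA (@max_nonadj_two_runs _ _ b); rewrite ?size_swap_blocks //.
  by lia.
exact: is_asc_swap_blocks.
Qed.

Lemma MND_swap_blocks : MND (swap_blocks n a b) = (0 < b).
Proof.
rewrite /MND (@max_nonadj_single _ _ b); rewrite ?size_swap_blocks.
  by have /implyP := b_gt0_a_gt0; lia.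
exact: is_des_swap_blocks.
Qed.

End SwapBlocks.

Definition swap_params (n : nat) : seq (nat * nat) :=
  (0, 0) :: [seq (a, b) | b <- index_iota 1 n, a <- index_iota 1 (n - b).+1].

Lemma mem_swap_params n a b : ((a, b) \in swap_params n) =
  ((a == 0) && (b == 0)) || [&& 0 < a, 0 < b & a + b <= n].
Proof.
rewrite in_cons xpair_eqE; congr (_ || _); apply/allpairsPdep/idP => [[b' [a' []]] | abn].
  by rewrite !mem_index_iota => ? ? [-> ->]; lia.
by exists b, a; rewrite !mem_index_iota; split=> //; lia.
Qed.

Lemma uniq_swap_params n : uniq (swap_params n).
Proof.
rewrite /= allpairs_uniq_dep ?iota_uniq // => [|? _|[? ?] [? ?] _ _ /= [-> ->] //].
  by rewrite andbT; apply/allpairsPdep => -[b [a [/[!mem_index_iota] ? _ [_ b0]]]]; lia.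
exact: iota_uniq.
Qed.

Lemma swap_blocks_inj n :
  {in swap_params n &, injective (fun ab => swap_blocks n ab.1 ab.2)}.
Proof.
pose code w := if head 0 w == 0 then (0, 0) else (head 0 w, index 0 w).
suff codeK : {in swap_params n, cancel (fun ab => swap_blocks n ab.1 ab.2) code}.
  by move=> ab ab' /codeK abK /codeK ab'K swap_eq; rewrite -abK -ab'K; congr code.
move=> [a b]; rewrite mem_swap_params /= => /orP[/andP[/eqP-> /eqP->] | /and3P[a_gt0 b_gt0 _]].
  by rewrite /code /swap_blocks /=; case: n.
rewrite /code /swap_blocks; case: b b_gt0 => // b _ /=; rewrite gtn_eqF //.
by rewrite index_cat mem_iota /=; case: a a_gt0 => //= a _; rewrite size_iota addn0.
Qed.

Section Avoiding132And321.
Variables (n : nat) (w : seq nat).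
Hypothesis size_w : size w = n.
Hypothesis w_uniq : uniq w.
Hypothesis mem_w : forall x, (x \in w) = (x < n).
Hypothesis w132 : avoids w [:: 1; 3; 2].
Hypothesis w321 : avoids w [:: 3; 2; 1].

Local Notation b := (index 0 w).

Lemma index0_lt : 0 < n -> b < n.
Proof. by move=> n_gt0; rewrite -size_w index_mem mem_w. Qed.

Lemma nth_index0 : 0 < n -> nth 0 w b = 0.
Proof. by move=> n_gt0; rewrite nth_index ?mem_w. Qed.

Lemma nth_inj i j : i < n -> j < n -> (nth 0 w i == nth 0 w j) = (i == j).
Proof. by rewrite -size_w => i_lt j_lt; rewrite nth_uniq. Qed.

Lemma increasing_before_index0 i j : i < j -> j < b -> nth 0 w i < nth 0 w j.
Proof.
move=> ij jb; have n_gt0 : 0 < n.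
  by rewrite -size_w (leq_trans _ (index_size 0 w)) //; lia.
have bn := index0_lt n_gt0.
have wj_gt0 : 0 < nth 0 w j by rewrite lt0n; apply/negbT; apply: (before_find 0 jb).
rewrite ltn_neqAle nth_inj ?(ltn_eqF ij) /= 1?leqNgt; try lia.
have := avoids321_nth w321 ij jb; rewrite size_w nth_index0 // wj_gt0.
by move=> /(_ bn) /= ->.
Qed.

Lemma increasing_from_index0 i j : b <= i -> i < j -> j < n -> nth 0 w i < nth 0 w j.
Proof.
move=> bi ij jn; have bn : b < n by apply: index0_lt; lia.
have wj_gt0 : 0 < nth 0 w j.
  rewrite lt0n; apply: contraTneq ij => wj0.
  have jw : j < size w by rewrite size_w.
  by rewrite -leqNgt -(index_uniq 0 jw w_uniq) wj0.
case: (ltngtP b i) bi => // [bi _ | <- _]; last by rewrite nth_index0 //; lia.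
rewrite ltn_neqAle nth_inj ?(ltn_eqF ij) /= 1?leqNgt; try lia.
have := avoids132_nth w132 bi ij; rewrite size_w nth_index0 ?wj_gt0; last lia.
by move=> /(_ jn) /= ->.
Qed.

Lemma sorted_take_index0 : sorted ltn (take b w).
Proof.
apply/(sortedP 0) => i; rewrite size_takel ?index_size // => lt_i1.
by rewrite /= !nth_take ?increasing_before_index0 ?(ltnW lt_i1).
Qed.

Lemma sorted_drop_index0 : sorted ltn (drop b w).
Proof.
apply/(sortedP 0) => i; rewrite size_drop size_w => lt_i1.
by rewrite /= !nth_drop increasing_from_index0 //; lia.
Qed.

Section NonIdentity.
Hypothesis b_gt0 : 0 < b.

Local Notation a := (nth 0 w 0).
Local Notation m := (nth 0 w b.-1).

Let bn : b < n.
Proof. by apply: index0_lt; rewrite -size_w (leq_trans b_gt0 (index_size 0 w)). Qed.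

Lemma outside_prefix_range k : b <= k -> k < n -> (nth 0 w k < a) || (m < nth 0 w k).
Proof.
move=> bk kn; have /andP[ka km] : (nth 0 w k != a) && (nth 0 w k != m).
  by rewrite !nth_inj //; lia.
case: (posnP b.-1) => [b1 | b1_gt0]; first by move: km; rewrite b1 neq_ltn.
have b1k : b.-1 < k by lia.
have := avoids132_nth w132 b1_gt0 b1k; rewrite size_w => /(_ kn).
by rewrite ltn_neqAle eq_sym ka ltn_neqAle km /=; lia.
Qed.

Lemma mem_take_index0 x : (x \in take b w) = (a <= x <= m).
Proof.
have le_a i : i < b -> a <= nth 0 w i.
  by case: (posnP i) => [-> // | ? ?]; rewrite ltnW ?increasing_before_index0.
have le_m i : i < b -> nth 0 w i <= m.
  move=> ib; case: (ltngtP i b.-1) => [? | | ->] //; last lia.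
  by rewrite ltnW ?increasing_before_index0 //; lia.
apply/idP/idP => [/(nthP 0)[i] | /andP[ax xm]].
  by rewrite size_takel ?index_size // => ib <-; rewrite nth_take // le_a ?le_m.
have xw : x \in w.
  by rewrite mem_w (leq_ltn_trans xm) // -mem_w mem_nth // size_w; lia.
have kn : index x w < n by rewrite -size_w index_mem.
case: (ltnP (index x w) b) => [kb | bk].
  by rewrite -(nth_index 0 xw) -(nth_take 0 kb) mem_nth ?size_takel ?index_size.
by have := outside_prefix_range bk kn; rewrite nth_index //; lia.
Qed.

Lemma take_index0 : take b w = iota a b.
Proof.
have am : a <= m.
  by case: (posnP b.-1) => [-> // | ?]; rewrite ltnW ?increasing_before_index0 //; lia.
have take_eq : take b w = iota a (m - a).+1.
  apply: (irr_sorted_eq ltn_trans ltnn); rewrite ?sorted_take_index0 ?iota_ltn_sorted //.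
  by move=> x; rewrite mem_take_index0 mem_iota; lia.
have := congr1 size take_eq; rewrite size_takel ?index_size // size_iota => b_eq.
by rewrite [in iota _ b]b_eq.
Qed.

Lemma head_add_index0_le : a + b <= n.
Proof.
have b1w : b.-1 < size w by rewrite size_w; lia.
have := mem_nth 0 b1w; rewrite mem_w.
by have := congr1 (nth 0 ^~ b.-1) take_index0; rewrite /= nth_take ?nth_iota; lia.
Qed.

Lemma drop_index0 : drop b w = iota 0 a ++ iota (a + b) (n - (a + b)).
Proof.
have abn := head_add_index0_le.
have mem_drop x : (x \in drop b w) = (x < n) && ~~ (a <= x < a + b).
  have : uniq (take b w ++ drop b w) by rewrite cat_take_drop.
  rewrite cat_uniq => /and3P[_ /hasPn disj _].
  rewrite -mem_w -[in x \in w](cat_take_drop b w) mem_cat take_index0 mem_iota.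
  case: (boolP (x \in drop b w)) => [/disj | _]; last by rewrite orbF andbN.
  by rewrite take_index0 mem_iota => ->; rewrite orbT.
apply: (irr_sorted_eq ltn_trans ltnn); rewrite ?sorted_drop_index0 //.
  rewrite (sorted_pairwise ltn_trans) pairwise_cat -!(sorted_pairwise ltn_trans).
  rewrite !iota_ltn_sorted !andbT; apply/allrelP => x y; rewrite !mem_iota; lia.
by move=> x; rewrite mem_drop mem_cat !mem_iota; lia.
Qed.

End NonIdentity.

Lemma avoiding_eq_swap_blocks :
  exists2 ab, ab \in swap_params n & w = swap_blocks n ab.1 ab.2.
Proof.
case: (posnP b) => [b0 | b_gt0].
  exists (0, 0); rewrite ?mem_head // /swap_blocks /= subn0.
  apply: (irr_sorted_eq ltn_trans ltnn); rewrite ?iota_ltn_sorted //.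
    by have := sorted_drop_index0; rewrite b0 drop0.
  by move=> x; rewrite mem_w mem_iota.
exists (nth 0 w 0, b); last first.
  by rewrite -[LHS](cat_take_drop b w) (take_index0 b_gt0) (drop_index0 b_gt0).
have a_gt0 : 0 < nth 0 w 0 by rewrite lt0n; apply/negbT; apply: (before_find 0 b_gt0).
by rewrite mem_swap_params a_gt0 b_gt0 (head_add_index0_le b_gt0) orbC.
Qed.

End Avoiding132And321.

Section PermutationWords.
Variable n : nat.

Lemma size_word (pi : 'S_n) : size (word pi) = n.
Proof. by rewrite size_map size_enum_ord. Qed.

Lemma nth_word (pi : 'S_n) (i : 'I_n) : nth 0 (word pi) i = pi i.
Proof. by rewrite (nth_map i) ?size_enum_ord // nth_ord_enum. Qed.

Lemma word_inj : injective (@word n).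
Proof.
move=> pi pi' eq_w; apply/permP => i; apply: ord_inj.
by rewrite -!nth_word eq_w.
Qed.

Lemma uniq_word (pi : 'S_n) : uniq (word pi).
Proof. by rewrite map_inj_uniq ?enum_uniq // => i j /val_inj /perm_inj. Qed.

Lemma mem_word (pi : 'S_n) x : (x \in word pi) = (x < n).
Proof.
rewrite /word; apply/idP/idP => [/mapP[i _ ->] | lt_xn]; [exact: ltn_ord | apply/mapP].
by exists ((pi^-1)%g (Ordinal lt_xn)); rewrite ?mem_enum ?permKV.
Qed.

Lemma word_onto (w : seq nat) : size w = n -> uniq w -> (forall x, x \in w -> x < n) ->
  exists pi : 'S_n, word pi = w.
Proof.
move=> size_w w_uniq lt_w.
have lt_nth (i : 'I_n) : nth 0 w i < n by rewrite lt_w // mem_nth ?size_w.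
have f_inj : injective (fun i => Ordinal (lt_nth i)).
  by move=> i j /(congr1 val) /eqP; rewrite /= nth_uniq ?size_w // => /eqP /val_inj.
exists (perm f_inj); apply: (@eq_from_nth _ 0) => [|i]; rewrite size_word ?size_w // => lt_in.
by rewrite (nth_word _ (Ordinal lt_in)) permE.
Qed.

End PermutationWords.

Local Open Scope ring_scope.

Lemma sum_avoiding_swap_blocks (R : nmodType) n (F : seq nat -> R) :
  \sum_(pi : 'S_n | avoids (word pi) [:: 1; 3; 2] && avoids (word pi) [:: 3; 2; 1])
     F (word pi)
  = \sum_(ab <- swap_params n) F (swap_blocks n ab.1 ab.2).
Proof.
rewrite -big_filter -(big_map (@word n) predT F).
rewrite -(big_map (fun ab => swap_blocks n ab.1 ab.2) predT F).
apply: perm_big; apply: uniq_perm => [||w].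
- by rewrite map_inj_uniq ?filter_uniq ?index_enum_uniq //; apply: word_inj.
- by rewrite map_inj_in_uniq ?uniq_swap_params //; apply: swap_blocks_inj.
apply/mapP/mapP => [[pi] | [[a b] ab_in ->]].
  rewrite mem_filter => /andP[/andP[pi132 pi321] _] ->.
  have [ab ab_in w_eq] :=
    avoiding_eq_swap_blocks (size_word pi) (uniq_word pi) (mem_word pi) pi132 pi321.
  by exists ab.
have abn : (a + b <= n)%N by move: ab_in; rewrite mem_swap_params; lia.
have [pi pi_w] : exists pi : 'S_n, word pi = swap_blocks n a b.
  apply: word_onto (size_swap_blocks abn) (uniq_swap_blocks abn) _ => x.
  by rewrite mem_swap_blocks.
by exists pi; rewrite // mem_filter mem_index_enum andbT pi_w swap_blocks_avoids.
Qed.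

(* Total weight of the non-identity avoiders with a first block of length b:
   there are n - b of them, one for each a, all with MNA = b/2 + (n-b)/2. *)
Definition mna_sum (R : comNzRingType) (y : R) (n : nat) : R :=
  \sum_(1 <= b < n) y ^+ (b./2 + (n - b)./2) *+ (n - b).

Section Coefficients.
Variables (R : comNzRingType) (p q y z : R).
Local Notation u := (p ^+ 2 * y).

Lemma GcoefE n :
  Gcoef p q y z n = p ^+ n.-1 * y ^+ n./2 + p ^+ n.-2 * q * z * mna_sum y n.
Proof.
rewrite /Gcoef (sum_avoiding_swap_blocks _
  (fun w => p ^+ asc w * q ^+ des w * y ^+ MNA w * z ^+ MND w)).
rewrite big_cons big_allpairs_dep /=.
rewrite asc_swap_blocks ?des_swap_blocks ?MNA_swap_blocks ?MND_swap_blocks //=.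
rewrite !subn0 add0n expr0 !mulr1; congr (_ + _); rewrite /mna_sum mulr_sumr.
apply: eq_big_nat => b /andP[b_gt0 b_lt].
rewrite (eq_big_nat _ _ (F2 := fun=> p ^+ n.-2 * q * z * y ^+ (b./2 + (n - b)./2))).
  by rewrite sumr_const_nat subn1 mulrnAr.
move=> a /andP[a_gt0 a_lt].
rewrite asc_swap_blocks ?des_swap_blocks ?MNA_swap_blocks ?MND_swap_blocks; try lia.
by rewrite b_gt0 expr1 subn1 mulrAC.
Qed.

Lemma mna_sum_recr n :
  mna_sum y n.+2 = y ^+ n.+1./2 *+ n.+1 + (y ^+ (n./2).+1 *+ n + y * mna_sum y n).
Proof.
case: n => [|n]; first by rewrite /mna_sum big_nat1 big_geq // mulr0 mulr0n !addr0.
rewrite /mna_sum big_nat_recl // [in LHS]big_nat_recl // mulr_sumr.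
congr (_ ^+ _ *+ _ + (_ ^+ _ *+ _ + _)); try lia.
by apply: eq_big_nat => b _; rewrite mulrnAr -exprS; congr (_ ^+ _ *+ _); lia.
Qed.

Lemma mna_sum_even t :
  mna_sum y t.*2.+2 = t.+1%:R ^+ 2 * y ^+ t + t%:R * t.+1%:R * y ^+ t.+1.
Proof.
elim: t => [|t IHt]; first by rewrite /mna_sum big_nat1 expr1n !mul0r mul1r addr0.
rewrite doubleS mna_sum_recr IHt; have -> : t.*2.+3./2 = t.+1 by lia.
have -> : t.*2.+2./2 = t.+1 by lia.
by rewrite !exprS -!muln2; ring.
Qed.

Lemma mna_sum_odd t : mna_sum y t.*2.+1 = t%:R * t.*2.+1%:R * y ^+ t.
Proof.
elim: t => [|t IHt]; first by rewrite /mna_sum big_geq // !mul0r.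
rewrite doubleS mna_sum_recr IHt; have -> : t.*2.+2./2 = t.+1 by lia.
have -> : t.*2.+1./2 = t by lia.
by rewrite !exprS -!muln2; ring.
Qed.

Lemma Gcoef0 : Gcoef p q y z 0 = 1.
Proof. by rewrite GcoefE /mna_sum big_geq // mulr0 addr0 mulr1. Qed.

Lemma Gcoef1 : Gcoef p q y z 1 = 1.
Proof. by rewrite GcoefE /mna_sum big_geq // mulr0 addr0 mulr1. Qed.

Lemma GcoefSS m : Gcoef p q y z m.+2 = u ^+ m./2 *
  if odd m then u + p * q * y * z * ((m./2).+1%:R * m.+2%:R)
  else p * y + q * z * ((m./2).+1%:R ^+ 2 + (m./2)%:R * (m./2).+1%:R * y).
Proof.
have [t [->|->]] : exists t, m = t.*2 \/ m = t.*2.+1 by exists m./2; lia.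
  rewrite odd_double doubleK GcoefE mna_sum_even.
  have -> : (t.*2.+2.-2 = 2 * t)%N by lia.
  have -> : (t.*2.+2.-1 = (2 * t).+1)%N by lia.
  have -> : (t.*2.+2./2 = t.+1)%N by lia.
  by rewrite exprMn -exprM !exprS; ring.
rewrite /= odd_double /= uphalf_double GcoefE -doubleS mna_sum_odd.
have -> : (t.+1.*2.+1.-2 = (2 * t).+1)%N by lia.
have -> : (t.+1.*2.+1.-1 = (2 * t).+2)%N by lia.
have -> : (t.+1.*2.+1./2 = t.+1)%N by lia.
by rewrite exprMn -exprM !exprS -!muln2; ring.
Qed.

(* Along each parity class GcoefSS is u^t times a quadratic polynomial in t,
   which is what the third difference operator (1 - u x^2)^3 annihilates. *)
Lemma Gcoef_third_difference n : (8 <= n)%N ->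
  Gcoef p q y z n - 3%:R * u * Gcoef p q y z (n - 2)
  + 3%:R * u ^+ 2 * Gcoef p q y z (n - 4)
  - u ^+ 3 * Gcoef p q y z (n - 6) = 0.
Proof.
move=> n_ge8; have [k ->] : exists k, n = k.+4.+4 by exists (n - 8)%N; lia.
rewrite !GcoefSS /= !negbK; case: (odd k); rewrite !exprS; ring.
Qed.

End Coefficients.

Section Denominator.
Variables (R : comNzRingType) (p y : R).
Local Notation u := (p ^+ 2 * y).

Lemma DpolyE : Dpoly p y =
  1 - (3%:R * u)%:P * 'X^2 + (3%:R * u ^+ 2)%:P * 'X^4 - (u ^+ 3)%:P * 'X^6.
Proof.
rewrite /Dpoly !(polyCM, polyC_exp, polyCMn, polyC1).
by move: (polyC (p ^+ 2)) (polyC y) => P Y; ring.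
Qed.

Lemma conv_Dpoly (g : nat -> R) n :
  \sum_(i < n.+1) g i * (Dpoly p y)`_(n - i) =
  g n - (if (n < 2)%N then 0 else 3%:R * u * g (n - 2)%N)
  + (if (n < 4)%N then 0 else 3%:R * u ^+ 2 * g (n - 4)%N)
  - (if (n < 6)%N then 0 else u ^+ 3 * g (n - 6)%N).
Proof.
pose G := \poly_(i < n.+1) g i.
have -> : \sum_(i < n.+1) g i * (Dpoly p y)`_(n - i) = (G * Dpoly p y)`_n.
  by rewrite coefM; apply: eq_bigr => i _; rewrite coef_poly ltn_ord.
rewrite DpolyE !(mulrDr, mulrBr, mulrN, mulr1, coefD, coefN).
rewrite ![G * (_%:P * _)]mulrCA !coefCM !coefMXn !coef_poly ltnSn !ltnS !leq_subr.
by do 3 case: ifP => _; rewrite ?mulr0.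
Qed.

End Denominator.

Unset Implicit Arguments.

Theorem theorem4 (R : comNzRingType) (p q y z : R) (n : nat) :
  \sum_(i < n.+1) Gcoef p q y z i * (Dpoly p y)`_(n - i) = (Apoly p q y z)`_n.
Proof.
rewrite conv_Dpoly /Apoly !(coefD, coefB, coefN, coefCM, coefXn, coefX, coef1).
have [n_lt8 | n_ge8] := ltnP n 8.
  case: n n_lt8 => [|[|[|[|[|[|[|[|[]//]]]]]]]] _;
  by rewrite /= ?Gcoef0 ?Gcoef1 ?GcoefSS /=; ring.
have [k n_eq] : exists k, n = k.+4.+4 by exists (n - 8)%N; lia.
move: (Gcoef_third_difference p q y z n_ge8); rewrite {}n_eq /= => ->; ring.
Qed.
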